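(* Let $k$ be a field, $R=k[x,y]$, $I=(x^d,y^d,x^by^{d-b})$ with $d\ge2$, $1\le b\le d-1$, $\gcd(d,b)=1$, and $J=(x^d,y^d)$. Then for every $\ell\ge1$ there exist nonnegative integers $s_\ell,t_\ell$ with $$JI^{\ell-1}:I^\ell=(x^{s_\ell},y^{t_\ell}).$$ *)

(* k[x,y] is modelled as {poly {poly k}}:
   x is the inner variable ('X)%:P, y is the outer variable 'X. *)
From HB Require Import structures.
From mathcomp Require Import all_boot all_order all_algebra.
Set Implicit Arguments. Unset Strict Implicit. Unset Printing Implicit Defensive.
Import GRing.Theory.
Local Open Scope ring_scope.

Definition bipoly (k : fieldType) := {poly {poly k}}.

Definition varx (k : fieldType) : bipoly k := ('X : {poly k})%:P.
Definition vary (k : fieldType) : bipoly k := 'X.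

Definition idl (k : fieldType) := bipoly k -> Prop.

Definition ideal_gen (k : fieldType) (s : seq (bipoly k)) : idl k :=
  fun f => exists c : 'I_(size s) -> bipoly k,
    f = \sum_(i < size s) c i * s`_i.

Definition ideal_unit (k : fieldType) : idl k := fun _ => True.

Definition ideal_mul (k : fieldType) (A B : idl k) : idl k :=
  fun f => exists (n : nat) (a b : 'I_n -> bipoly k),
    (forall i, A (a i) /\ B (b i)) /\ f = \sum_(i < n) a i * b i.

Fixpoint ideal_exp (k : fieldType) (A : idl k) (n : nat) : idl k :=
  match n with
  | 0 => @ideal_unit k
  | m.+1 => @ideal_mul k A (ideal_exp A m)
  end.

Definition ideal_colon (k : fieldType) (A B : idl k) : idl k :=
  fun f => forall g, B g -> A (f * g).

Definition ideal_eq (k : fieldType) (A B : idl k) : Prop :=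
  forall f, A f <-> B f.

(* All ideals involved are monomial, hence determined by their sets of
   exponents (i, j); products of ideals correspond to sums of exponent sets
   and colon ideals to their "quotients".  Every generator of I^l other than
   (x^b y^(d-b))^l has a factor x^d or y^d and so lies in J I^(l-1); hence
   membership of x^i y^j in J I^(l-1) : I^l is decided by that one generator.
   Writing a monomial of J I^(l-1) as a product of n >= 1 pure powers (p of
   them in x) and l - n mixed generators, the test says that
   -j <= d p - b n <= i for some 1 <= n <= l and 0 <= p <= n.  Such a
   condition holds iff it holds with j = 0 or with i = 0, so the exponent set
   is {i >= s} u {j >= t}. *)
From Stdlib Require Import Classical Wf_nat.
From HB Require Import structures.
From mathcomp Require Import all_boot all_order all_algebra.
From mathcomp Require Import zify.
Import GRing.Theory.
Local Open Scope ring_scope.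
Set Implicit Arguments. Unset Strict Implicit.

Section Monomials.
Variable k : fieldType.
Implicit Types f g : bipoly k.

Definition coef2 f i j : k := (f`_j)`_i.

Definition monom i j : bipoly k := varx k ^+ i * vary k ^+ j.

Definition supported (S : nat -> nat -> Prop) f :=
  forall i j, coef2 f i j != 0 -> S i j.

Lemma monomE i j : monom i j = ('X^i)%:P * 'X^j.
Proof. by rewrite /monom /varx /vary polyC_exp. Qed.

Lemma monomD i j i' j' : monom i j * monom i' j' = monom (i + i') (j + j').
Proof. by rewrite /monom !exprD mulrACA. Qed.

Lemma coef2_monom i j i' j' :
  coef2 (monom i j) i' j' = ((i' == i) && (j' == j))%:R.
Proof.
rewrite /coef2 monomE coefCM coefXn.
case: (j' == j); last by rewrite mulr0 coef0 andbF.
by rewrite mulr1 coefXn andbT.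
Qed.

Lemma coef2_mul_monom f a c i j :
  coef2 (f * monom a c) (i + a) (j + c) = coef2 f i j.
Proof.
rewrite /coef2 monomE mulrA coefMXn ltnNge leq_addl /= addnK coefMC coefMXn.
by rewrite ltnNge leq_addl /= addnK.
Qed.

Lemma coef2_scale (c : k) f i j : coef2 (c%:P%:P * f) i j = c * coef2 f i j.
Proof. by rewrite /coef2 !coefCM. Qed.

Lemma supported0 S : supported S 0.
Proof. by move=> i j; rewrite /coef2 !coef0 eqxx. Qed.

Lemma supportedD S f g : supported S f -> supported S g -> supported S (f + g).
Proof.
move=> hf hg i j; rewrite /coef2 !coefD.
by case: (eqVneq ((f`_j)`_i) 0) => [-> | /hf //]; rewrite add0r; apply: hg.
Qed.

Lemma supported_sum S n (F : 'I_n -> bipoly k) :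
  (forall i, supported S (F i)) -> supported S (\sum_(i < n) F i).
Proof.
by move=> hF; elim/big_ind: _ => //; [apply: supported0 | apply: supportedD].
Qed.

Lemma supportedM (S1 S2 S : nat -> nat -> Prop) f g :
  supported S1 f -> supported S2 g ->
  (forall i1 j1 i2 j2, S1 i1 j1 -> S2 i2 j2 -> S (i1 + i2)%N (j1 + j2)%N) ->
  supported S (f * g).
Proof.
move=> hf hg hS i j nz; apply: NNPP => notS; move/eqP: nz; apply.
rewrite /coef2 coefM coef_sum; apply: big1 => [[j1 /= hj1]] _.
rewrite coefM; apply: big1 => [[i1 /= hi1]] _.
case: (eqVneq ((f`_j1)`_i1) 0) => [-> | /hf f1]; first by rewrite mul0r.
case: (eqVneq ((g`_(j - j1))`_(i - i1)) 0) => [-> | /hg g1]; first by rewrite mulr0.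
by case: notS; have := hS _ _ _ _ f1 g1; rewrite !subnKC // -ltnS.
Qed.

Lemma supported_monom (S : nat -> nat -> Prop) (c : k) i j :
  S i j -> supported S (c%:P%:P * monom i j).
Proof.
move=> hS i' j'; rewrite coef2_scale coef2_monom.
by case: (eqVneq i' i) => [-> | _]; case: (eqVneq j' j) => [-> | _];
  rewrite ?mulr0 ?eqxx.
Qed.

Lemma monom_decomp f :
  f = \sum_(j < size f) \sum_(i < size f`_j) (coef2 f i j)%:P%:P * monom i j.
Proof.
rewrite -{1}[f]coefK poly_def; apply: eq_bigr => j _.
rewrite -{1}[f`_j]coefK poly_def -mul_polyC rmorph_sum /= mulr_suml.
by apply: eq_bigr => i _; rewrite monomE -mul_polyC rmorphM /= mulrA.
Qed.

Lemma supported_ind (P : bipoly k -> Prop) (S : nat -> nat -> Prop) :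
  P 0 -> (forall f g, P f -> P g -> P (f + g)) ->
  (forall c i j, S i j -> P (c%:P%:P * monom i j)) ->
  forall f, supported S f -> P f.
Proof.
move=> P0 PD Pmonom f hf; rewrite (monom_decomp f).
elim/big_ind: _ => // j _; elim/big_ind: _ => // i _.
by case: (eqVneq (coef2 f i j) 0) => [-> | /hf]; [rewrite !mul0r | apply: Pmonom].
Qed.

End Monomials.

Section IdealClosure.
Variable k : fieldType.

Lemma ideal_gen_nth (s : seq (bipoly k)) n c :
  (n < size s)%N -> ideal_gen s (c * s`_n).
Proof.
move=> hn; exists (fun i => if val i == n then c else 0).
rewrite (bigD1 (Ordinal hn)) //= eqxx big1 ?addr0 // => i /negbTE ne_i.
suff -> : (val i == n) = false by rewrite mul0r.
by apply: contraFF ne_i => /eqP eq_i; apply/eqP/val_inj.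
Qed.

Lemma ideal_gen0 (s : seq (bipoly k)) : ideal_gen s 0.
Proof. by exists (fun _ => 0); rewrite big1 // => i _; rewrite mul0r. Qed.

Lemma ideal_genD (s : seq (bipoly k)) f g :
  ideal_gen s f -> ideal_gen s g -> ideal_gen s (f + g).
Proof.
move=> [c1 ->] [c2 ->]; exists (fun i => c1 i + c2 i).
by rewrite -big_split; apply: eq_bigr => i _; rewrite mulrDl.
Qed.

Lemma ideal_mul0 (A B : idl k) : ideal_mul A B 0.
Proof. by exists 0%N, (fun _ => 0), (fun _ => 0); split; [case | rewrite big_ord0]. Qed.

Lemma ideal_mulD (A B : idl k) f g :
  ideal_mul A B f -> ideal_mul A B g -> ideal_mul A B (f + g).
Proof.
move=> [n1 [a1 [b1 [h1 ->]]]] [n2 [a2 [b2 [h2 ->]]]].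
exists (n1 + n2)%N.
exists (fun i => match split i with inl u => a1 u | inr v => a2 v end).
exists (fun i => match split i with inl u => b1 u | inr v => b2 v end).
split; first by move=> i; case: (split i).
by rewrite big_split_ord; congr (_ + _); apply: eq_bigr => i _;
  [rewrite (unsplitK (inl i)) | rewrite (unsplitK (inr i))].
Qed.

Lemma ideal_mul_mem (A B : idl k) f g : A f -> B g -> ideal_mul A B (f * g).
Proof. by move=> hf hg; exists 1%N, (fun _ => f), (fun _ => g); rewrite big_ord1. Qed.

End IdealClosure.

Section MonomialIdeals.
Variable k : fieldType.
Implicit Types (S : nat -> nat -> Prop) (A B : idl k).

Definition monomial_ideal S A := forall f, A f <-> supported S f.

Definition divisible_by_some (E : seq (nat * nat)) i j :=
  exists2 a, a \in E & (a.1 <= i)%N /\ (a.2 <= j)%N.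

Definition sumset S1 S2 i j := exists i1 j1 i2 j2,
  [/\ S1 i1 j1, S2 i2 j2, i = (i1 + i2)%N & j = (j1 + j2)%N].

Lemma monomial_ideal_monom S A c i j :
  monomial_ideal S A -> S i j -> A (c%:P%:P * monom k i j).
Proof. by move=> hA hS; apply/hA; apply: supported_monom. Qed.

Lemma eq_monomial_ideal S S' A :
  (forall i j, S i j <-> S' i j) -> monomial_ideal S A -> monomial_ideal S' A.
Proof.
move=> eqS hA f; rewrite hA.
by split=> hf i j /hf /eqS.
Qed.

Lemma ideal_eq_monomial S A B :
  monomial_ideal S A -> monomial_ideal S B -> ideal_eq A B.
Proof. by move=> hA hB f; rewrite hA hB. Qed.

Lemma monomial_ideal_unit : monomial_ideal (fun _ _ => True) (@ideal_unit k).
Proof. by []. Qed.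

Lemma monomial_ideal_gen E :
  monomial_ideal (divisible_by_some E) (ideal_gen [seq monom k a.1 a.2 | a <- E]).
Proof.
move=> f; split.
- move=> [c ->]; apply: supported_sum => n.
  have nE : (n < size E)%N by rewrite -(size_map (fun a => monom k a.1 a.2)).
  rewrite (nth_map (0, 0)%N) //; set a := nth _ E n.
  have := @supported_monom k (fun i j => i = a.1 /\ j = a.2) 1 _ _ (conj erefl erefl).
  rewrite !polyC1 mul1r => ha.
  apply: (supportedM (S1 := fun _ _ => True) _ ha) => // i1 j1 i2 j2 _ [-> ->].
  by exists a; [apply: mem_nth | rewrite !leq_addl].
- apply: supported_ind; [exact: ideal_gen0 | exact: ideal_genD |].
  move=> c i j [a aE [ai aj]].
  have -> : c%:P%:P * monom k i j = c%:P%:P * monom k (i - a.1) (j - a.2)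
                                     * [seq monom k a.1 a.2 | a <- E]`_(index a E).
    by rewrite (nth_map (0, 0)%N) ?index_mem // nth_index // -mulrA monomD !subnK.
  by apply: ideal_gen_nth; rewrite size_map index_mem.
Qed.

Lemma monomial_ideal_mul S1 S2 A B :
  monomial_ideal S1 A -> monomial_ideal S2 B ->
  monomial_ideal (sumset S1 S2) (ideal_mul A B).
Proof.
move=> hA hB f; split.
- move=> [n [a [b [hab ->]]]]; apply: supported_sum => i.
  have [/hA ha /hB hb] := hab i.
  by apply: supportedM ha hb _ => i1 j1 i2 j2 h1 h2; exists i1, j1, i2, j2.
- apply: supported_ind; [exact: ideal_mul0 | exact: ideal_mulD |].
  move=> c _ _ [i1 [j1 [i2 [j2 [h1 h2 -> ->]]]]].
  rewrite -monomD mulrA; apply: ideal_mul_mem; first exact: monomial_ideal_monom.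
  by have := monomial_ideal_monom 1 hB h2; rewrite !polyC1 mul1r.
Qed.

Lemma monomial_ideal_colon S1 S2 A B :
  monomial_ideal S1 A -> monomial_ideal S2 B ->
  monomial_ideal (fun i j => forall i' j', S2 i' j' -> S1 (i + i')%N (j + j')%N)
                 (ideal_colon A B).
Proof.
move=> hA hB f; split.
- move=> hf i j nz i' j' h2.
  have /hA /(_ (i + i')%N (j + j')%N) : A (f * monom k i' j').
    by apply: hf; have := monomial_ideal_monom 1 hB h2; rewrite !polyC1 mul1r.
  by rewrite coef2_mul_monom; apply.
- move=> hf g /hB hg; apply/hA.
  by apply: supportedM hf hg _ => i1 j1 i2 j2 h1; apply: h1.
Qed.

End MonomialIdeals.

Lemma divisible_by_some_pure s t i j :
  divisible_by_some [:: (s, 0); (0, t)]%N i j <-> (s <= i)%N \/ (t <= j)%N.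
Proof.
split.
- by move=> [a]; rewrite !inE => /orP[] /eqP -> /= [hi hj]; [left | right].
- by case=> h; [exists (s, 0)%N | exists (0, t)%N]; rewrite ?inE ?eqxx ?orbT.
Qed.

Lemma upclosed_threshold (P : nat -> Prop) :
  (forall i i', P i -> (i <= i')%N -> P i') -> (exists i, P i) ->
  exists s, forall i, P i <-> (s <= i)%N.
Proof.
move=> up exP.
have [s [[Ps s_min] _]] :=
  dec_inh_nat_subset_has_unique_least_element P (fun n => classic (P n)) exP.
by exists s => i; split=> [/s_min /leP // | ]; apply: up.
Qed.

Lemma corner_threshold (E : nat -> nat -> Prop) :
  (forall i j i' j', E i j -> (i <= i')%N -> (j <= j')%N -> E i' j') ->
  (forall i j, E i j -> E i 0 \/ E 0 j) ->
  (exists i, E i 0) -> (exists j, E 0 j) ->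
  exists s t, forall i j, E i j <-> (s <= i)%N \/ (t <= j)%N.
Proof.
move=> up split_corner exI exJ.
have [s hs] : exists s, forall i, E i 0 <-> (s <= i)%N.
  by apply: upclosed_threshold exI => i i' hi le_ii'; apply: up hi le_ii' _.
have [t ht] : exists t, forall j, E 0 j <-> (t <= j)%N.
  by apply: upclosed_threshold exJ => j j' hj le_jj'; apply: up hj _ le_jj'.
exists s, t => i j; split.
- by case/split_corner => [/hs | /ht]; [left | right].
- by case=> [/hs | /ht] h; apply: up h _ _.
Qed.

Section Exponents.
Variables d b e : nat.

Definition gens_I : seq (nat * nat) := [:: (d, 0); (0, d); (b, e)]%N.

Definition Ipow_exps m i j := exists p q r,
  [/\ (p + q + r = m)%N, (d * p + b * r <= i)%N & (d * q + e * r <= j)%N].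

Definition JIpow_exps m i j := exists p q r,
  [/\ (p + q + r = m)%N, (0 < p + q)%N, (d * p + b * r <= i)%N
    & (d * q + e * r <= j)%N].

Definition balanced L i j := exists n p,
  [/\ (0 < n <= L)%N, (p <= n)%N, (d * p <= i + b * n)%N & (b * n <= j + d * p)%N].

Lemma Ipow_exps0 i j : Ipow_exps 0 i j.
Proof. by exists 0%N, 0%N, 0%N; rewrite !muln0. Qed.

Lemma Ipow_exps1 i j : divisible_by_some gens_I i j <-> Ipow_exps 1 i j.
Proof.
split.
- move=> [a]; rewrite !inE => /or3P[] /eqP -> /= [hi hj].
  + by exists 1%N, 0%N, 0%N; rewrite !muln0 muln1 !addn0.
  + by exists 0%N, 1%N, 0%N; rewrite !muln0 muln1 !addn0.
  + by exists 0%N, 0%N, 1%N; rewrite !muln0 !muln1 !add0n.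
- move=> [p [q [r [/eqP hm hi hj]]]].
  case: p q r hm hi hj => [|[|p]] [|[|q]] [|[|r]] //;
    rewrite ?muln0 ?muln1 ?addn0 => _ hi hj.
  + by exists (b, e)%N; rewrite ?inE ?eqxx ?orbT.
  + by exists (0, d)%N; rewrite ?inE ?eqxx ?orbT.
  + by exists (d, 0)%N; rewrite ?inE ?eqxx ?orbT.
Qed.

Lemma Ipow_expsS m i j :
  sumset (Ipow_exps 1) (Ipow_exps m) i j <-> Ipow_exps m.+1 i j.
Proof.
split.
- move=> [i1 [j1 [i2 [j2 [[p1 [q1 [r1 [h1 hi1 hj1]]]]
                           [p2 [q2 [r2 [h2 hi2 hj2]]]] -> ->]]]]].
  by exists (p1 + p2)%N, (q1 + q2)%N, (r1 + r2)%N; split; rewrite ?mulnDr; lia.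
- move=> [p [q [r [hm hi hj]]]].
  case: p hm hi => [|p] hm hi; last first.
    exists d, 0%N, (i - d)%N, j; split; [ | | lia | by []].
      by exists 1%N, 0%N, 0%N; split; lia.
    by exists p, q, r; rewrite mulnS in hi; split; lia.
  case: q hm hj => [|q] hm hj; last first.
    exists 0%N, d, i, (j - d)%N; split; [ | | by [] | lia].
      by exists 0%N, 1%N, 0%N; split; lia.
    by exists 0%N, q, r; rewrite mulnS in hj; split; lia.
  case: r hm hi hj => [|r] // hm hi hj.
  exists b, e, (i - b)%N, (j - e)%N; split; [ | | lia | lia].
    by exists 0%N, 0%N, 1%N; split; lia.
  by exists 0%N, 0%N, r; rewrite !mulnS in hi hj; split; lia.
Qed.

Lemma JIpow_expsE m i j :
  sumset (fun i j => (d <= i)%N \/ (d <= j)%N) (Ipow_exps m) i j <->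
  JIpow_exps m.+1 i j.
Proof.
split.
- move=> [i1 [j1 [i2 [j2 [[hd | hd] [p [q [r [hm hi hj]]]] -> ->]]]]].
  + by exists p.+1, q, r; split; rewrite ?mulnS; lia.
  + by exists p, q.+1, r; split; rewrite ?mulnS; lia.
- move=> [[|p] [q [r [hm hpos hi hj]]]].
  + case: q hm hpos hj => [|q] // hm _ hj.
    exists 0%N, d, i, (j - d)%N; split; [by right | | by [] | lia].
    by exists 0%N, q, r; rewrite mulnS in hj; split; lia.
  + exists d, 0%N, (i - d)%N, j; split; [by left | | lia | by []].
    by exists p, q, r; rewrite mulnS in hi; split; lia.
Qed.

Lemma colon_exps L i j : d = (b + e)%N ->
  (forall i' j', Ipow_exps L i' j' -> JIpow_exps L (i + i') (j + j')) <->
  balanced L i j.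
Proof.
move=> hde; split.
- move=> in_colon.
  have [p [q [r [hL hpos hi hj]]]] : JIpow_exps L (i + b * L) (j + e * L).
    by apply: in_colon; exists 0%N, 0%N, L; rewrite !muln0.
  exists (p + q)%N, p; rewrite -hL hde !mulnDr !mulnDl in hi hj *; split; lia.
- move=> [n [p [hn hp hi hj]]] i' j' [p' [q' [r' [hL hi' hj']]]].
  have [pq'_0 | pq'_gt0] := posnP (p' + q'); last by exists p', q', r'; split; lia.
  have [p'0 q'0] : p' = 0%N /\ q' = 0%N by lia.
  subst p' q'.
  have [q0 def_n] : exists q0, n = (p + q0)%N by exists (n - p)%N; lia.
  have [r0 def_L] : exists r0, L = (n + r0)%N by exists (L - n)%N; lia.
  exists p, q0, r0; rewrite def_L def_n hde !mulnDr !mulnDl in hi hj hi' hj' *.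
  by split; lia.
Qed.

Lemma balanced_threshold L : (b <= d)%N -> (0 < L)%N ->
  exists s t, forall i j, balanced L i j <-> (s <= i)%N \/ (t <= j)%N.
Proof.
move=> hbd hL; apply: corner_threshold.
- move=> i j i' j' [n [p [hn hp hi hj]]] hii' hjj'.
  by exists n, p; split; lia.
- move=> i j [n [p [hn hp hi hj]]].
  by case: (leqP (b * n) (d * p)) => h; [left | right]; exists n, p; split; lia.
- by exists d, 1%N, 1%N; split; lia.
- by exists b, 1%N, 0%N; split; lia.
Qed.

End Exponents.

Section BivariateIdeals.
Variable k : fieldType.

Lemma monomial_ideal_pure s t :
  monomial_ideal (fun i j => (s <= i)%N \/ (t <= j)%N)
                 (ideal_gen [:: varx k ^+ s; vary k ^+ t]).
Proof.
have -> : [:: varx k ^+ s; vary k ^+ t] =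
          [seq monom k a.1 a.2 | a <- [:: (s, 0); (0, t)]%N].
  by rewrite /monom /= !expr0 mulr1 mul1r.
exact: eq_monomial_ideal (divisible_by_some_pure s t) (monomial_ideal_gen _).
Qed.

Variables d b : nat.
Let e := (d - b)%N.
Let I := ideal_gen [:: varx k ^+ d; vary k ^+ d; varx k ^+ b * vary k ^+ e].

Lemma monomial_ideal_Ipow m : monomial_ideal (Ipow_exps d b e m) (ideal_exp I m).
Proof.
have hI : monomial_ideal (Ipow_exps d b e 1) I.
  have -> : I = ideal_gen [seq monom k a.1 a.2 | a <- gens_I d b e].
    by rewrite /I /monom /= !expr0 mulr1 mul1r.
  exact: eq_monomial_ideal (Ipow_exps1 d b e) (monomial_ideal_gen _).
elim: m => [|m IH] /=.
  apply: eq_monomial_ideal (@monomial_ideal_unit k) => i j.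
  by split=> // _; apply: Ipow_exps0.
exact: eq_monomial_ideal (Ipow_expsS d b e m) (monomial_ideal_mul hI IH).
Qed.

End BivariateIdeals.

Theorem mainTheorem9 (k : fieldType) (d b : nat)
  (hd : (2 <= d)%N) (hb1 : (1 <= b)%N) (hb2 : (b <= d - 1)%N)
  (hcop : coprime d b) (l : nat) (hl : (1 <= l)%N) :
  let I := ideal_gen [:: varx k ^+ d; vary k ^+ d;
                         varx k ^+ b * vary k ^+ (d - b)] in
  let J := ideal_gen [:: varx k ^+ d; vary k ^+ d] in
  exists s t : nat,
    ideal_eq (ideal_colon (ideal_mul J (ideal_exp I (l - 1))) (ideal_exp I l))
             (ideal_gen [:: varx k ^+ s; vary k ^+ t]).
Proof.
move=> I J; case: l hl => // m _; rewrite subn1 /=.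
have hde : d = (b + (d - b))%N by lia.
have hbd : (b <= d)%N := leq_trans hb2 (leq_subr 1 d).
have [s [t hst]] := balanced_threshold hbd (ltn0Sn m).
exists s, t; apply: ideal_eq_monomial (@monomial_ideal_pure k s t).
have hJIm :=
  monomial_ideal_mul (@monomial_ideal_pure k d d) (@monomial_ideal_Ipow k d b m).
have := monomial_ideal_colon (eq_monomial_ideal (JIpow_expsE _ _ _ _) hJIm)
                             (@monomial_ideal_Ipow k d b m.+1).
by apply: eq_monomial_ideal => i j; rewrite (colon_exps _ _ _ hde) hst.
Qed.
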